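(* Let $\mathcal C$ be a category with finite products, regarded as a cartesian monoidal category. Then the category of simplicial objects in $\mathcal C$ is equivalent to the category of oplax monoidal functors $\Delta_{*,*}^{op}\to\mathcal C$ (with monoidal natural transformations). The equivalence sends a simplicial object $X$ to its restriction to endpoint-preserving maps, equipped with the oplax structure maps $(d_{p+1}^{\,q},d_0^{\,p})\colon X_{p+q}\to X_p\times X_q$ (front $p$-face and back $q$-face).
   Context: $\Delta_{*,*}$ is the subcategory of the simplicial category $\Delta$ with objects $[n]=\{0<\dots<n\}$, $n\ge0$, and morphisms the order-preserving maps $f\colon[m]\to[n]$ with $f(0)=0$ and $f(m)=n$. It is strict monoidal with $[p]\otimes[q]=[p+q]$, obtained by identifying $p\in[p]$ with $0\in[q]$ (and $f\otimes g$ acting by $f$ on the first block and by shifted $g$ on the second), unit $[0]$. An oplax monoidal functor $F\colon\Delta_{*,*}^{op}\to\mathcal C$ is a functor with natural maps $F([p]\otimes[q])\to F[p]\times F[q]$ and $F[0]\to\ast$ satisfying the usual coassociativity and counitality coherence. For a simplicial object $X$, $d_i\colon X_n\to X_{n-1}$ are the face maps; $d_{p+1}^{\,q}$ means $d_{p+1}$ applied $q$ times and $d_0^{\,p}$ means $d_0$ applied $p$ times. *)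

From Stdlib Require Import FunctionalExtensionality ProofIrrelevance.
From HB Require Import structures.
From mathcomp Require Import all_boot zify.

Set Implicit Arguments.
Unset Strict Implicit.
Unset Printing Implicit Defensive.

(** * Categories (hom-types with Leibniz equality of morphisms)        *)

Record Cat := Cat_ {
  ob :> Type;
  hom : ob -> ob -> Type;
  comp : forall a b c, hom b c -> hom a b -> hom a c;   (* comp g f = g o f *)
  idm : forall a, hom a a;
  comp1f : forall a b (f : hom a b), comp (idm b) f = f;
  compf1 : forall a b (f : hom a b), comp f (idm a) = f;
  compA : forall a b c d (h : hom c d) (g : hom b c) (f : hom a b),
      comp h (comp g f) = comp (comp h g) f }.
Arguments hom {_} _ _.
Arguments comp {_ _ _ _} _ _.
Arguments idm {_} _.

Record Functor (C D : Cat) := Functor_ {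
  F0 :> C -> D;
  F1 : forall a b : C, hom a b -> hom (F0 a) (F0 b);
  F1_id : forall a, F1 (idm a) = idm (F0 a);
  F1_comp : forall a b c (g : hom b c) (f : hom a b),
      F1 (comp g f) = comp (F1 g) (F1 f) }.
Arguments F1 {C D} _ {a b} _.

Definition is_equivalence (C D : Cat) (F : Functor C D) : Prop :=
  exists (G : Functor D C)
         (eta : forall a : C, hom a (G (F a)))
         (eta' : forall a : C, hom (G (F a)) a)
         (eps : forall b : D, hom (F (G b)) b)
         (eps' : forall b : D, hom b (F (G b))),
    [/\ forall a a' (f : hom a a'), comp (eta a') f = comp (F1 G (F1 F f)) (eta a),
        forall b b' (g : hom b b'), comp (eps b') (F1 F (F1 G g)) = comp g (eps b),
        forall a, comp (eta' a) (eta a) = idm a /\ comp (eta a) (eta' a) = idm _ &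
        forall b, comp (eps' b) (eps b) = idm _ /\ comp (eps b) (eps' b) = idm b].

Record FinProducts (C : Cat) := FinProducts_ {
  term : C;
  bang : forall a : C, hom a term;
  bang_uniq : forall a (f : hom a term), f = bang a;
  prodo : C -> C -> C;
  ppr1 : forall a b, hom (prodo a b) a;
  ppr2 : forall a b, hom (prodo a b) b;
  pairm : forall c a b, hom c a -> hom c b -> hom c (prodo a b);
  ppr1_pair : forall c a b (f : hom c a) (g : hom c b), comp (ppr1 a b) (pairm f g) = f;
  ppr2_pair : forall c a b (f : hom c a) (g : hom c b), comp (ppr2 a b) (pairm f g) = g;
  pair_uniq : forall c a b (h : hom c (prodo a b)),
      h = pairm (comp (ppr1 a b) h) (comp (ppr2 a b) h) }.
Arguments term {C} _.
Arguments bang {C} _ _.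
Arguments prodo {C} _ _ _.
Arguments ppr1 {C} _ {a b}.
Arguments ppr2 {C} _ {a b}.
Arguments pairm {C} _ {c a b} _ _.

Section ProdOps.
Variables (C : Cat) (P : FinProducts C).
Definition fprodm (a b a' b' : C) (f : hom a a') (g : hom b b') :
  hom (prodo P a b) (prodo P a' b') :=
  pairm P (comp f (ppr1 P)) (comp g (ppr2 P)).
Definition passoc (a b c : C) : hom (prodo P a (prodo P b c)) (prodo P (prodo P a b) c) :=
  pairm P (pairm P (ppr1 P) (comp (ppr1 P) (ppr2 P))) (comp (ppr2 P) (ppr2 P)).
End ProdOps.
Arguments fprodm {C} P {a b a' b'} _ _.
Arguments passoc {C} P a b c.

(** * The simplex category Delta and its subcategory Delta_{*,*}       *)

(** Order-preserving maps [m] -> [n], [k] = 'I_k.+1 = {0 < ... < k}. *)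
Definition dmono m n (f : {ffun 'I_m.+1 -> 'I_n.+1}) : bool :=
  [forall i : 'I_m.+1, forall j : 'I_m.+1, (i <= j)%N ==> (f i <= f j)%N].
Definition dmap m n := {f : {ffun 'I_m.+1 -> 'I_n.+1} | dmono f}.
Definition dfn m n (f : dmap m n) : 'I_m.+1 -> 'I_n.+1 := fun i => (sval f) i.

Lemma dfn_mono m n (f : dmap m n) (i j : 'I_m.+1) :
  (i <= j)%N -> (dfn f i <= dfn f j)%N.
Proof.
case: f => f Hf ij; rewrite /dfn /=.
by move/forallP: Hf => /(_ i) /forallP /(_ j) /implyP; apply.
Qed.

Lemma dmap_eq m n (a b : dmap m n) : (forall i, (dfn a i : nat) = dfn b i) -> a = b.
Proof. by move=> H; apply: val_inj; apply/ffunP => i; apply: val_inj; exact: H. Qed.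

Lemma did_mono n : dmono [ffun i : 'I_n.+1 => i].
Proof. by apply/forallP => i; apply/forallP => j; apply/implyP; rewrite !ffunE. Qed.
Definition did n : dmap n n := exist (@dmono n n) _ (did_mono n).

Lemma dcomp_mono l m n (f : dmap l m) (g : dmap m n) :
  dmono [ffun i => dfn g (dfn f i)].
Proof.
apply/forallP => i; apply/forallP => j; apply/implyP => ij; rewrite !ffunE.
by apply: dfn_mono; apply: dfn_mono.
Qed.
(** dcomp f g = g o f *)
Definition dcomp l m n (f : dmap l m) (g : dmap m n) : dmap l n :=
  exist (@dmono l n) _ (dcomp_mono f g).

(** Endpoint-preserving maps: the morphisms of Delta_{*,*}. *)
Definition endpt m n (f : dmap m n) : bool :=
  (dfn f ord0 == ord0) && (dfn f ord_max == ord_max).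
Definition emap m n := {f : dmap m n | endpt f}.
Definition efn m n (f : emap m n) : 'I_m.+1 -> 'I_n.+1 := dfn (sval f).

Lemma eid_endpt n : endpt (did n).
Proof. by rewrite /endpt /dfn /= !ffunE !eqxx. Qed.
Definition eid n : emap n n := exist (@endpt n n) _ (eid_endpt n).

Lemma ecomp_endpt l m n (f : emap l m) (g : emap m n) :
  endpt (dcomp (sval f) (sval g)).
Proof.
case: f g => f Hf [g Hg] /=.
move/andP: Hf => [/eqP f0 /eqP f1]; move/andP: Hg => [/eqP g0 /eqP g1].
rewrite /endpt {1 2}/dfn /= !ffunE f0 f1 g0 g1 !eqxx. by [].
Qed.
Definition ecomp l m n (f : emap l m) (g : emap m n) : emap l n :=
  exist (@endpt l n) _ (ecomp_endpt f g).

(** * Simplicial objects in C (contravariant functors Delta^op -> C)   *)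

Section Simplicial.
Variable C : Cat.

Record sobj := SObj {
  sX : nat -> C;
  sact : forall m n, dmap m n -> hom (sX n) (sX m);
  sact_id : forall n, sact (did n) = idm (sX n);
  sact_comp : forall l m n (f : dmap l m) (g : dmap m n),
      sact (dcomp f g) = comp (sact f) (sact g) }.

Record smor (X Y : sobj) := SMor {
  scomp : forall n, hom (sX X n) (sX Y n);
  snat : forall m n (f : dmap m n),
      comp (scomp m) (sact X f) = comp (sact Y f) (scomp n) }.

Lemma smor_eq X Y (a b : smor X Y) : (forall n, scomp a n = scomp b n) -> a = b.
Proof.
case: a b => a Ha [b Hb] /= H.
have E : a = b by apply: functional_extensionality_dep.
subst b; f_equal; apply: proof_irrelevance.
Qed.

Lemma sid_nat X m n (f : dmap m n) :
  comp (idm (sX X m)) (sact X f) = comp (sact X f) (idm (sX X n)).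
Proof. by rewrite comp1f compf1. Qed.
Definition sid X : smor X X := SMor (@sid_nat X).

Lemma scomp_nat X Y Z (b : smor Y Z) (a : smor X Y) m n (f : dmap m n) :
  comp (comp (scomp b m) (scomp a m)) (sact X f)
  = comp (sact Z f) (comp (scomp b n) (scomp a n)).
Proof. by rewrite -compA snat compA snat compA. Qed.
Definition scompose X Y Z (b : smor Y Z) (a : smor X Y) : smor X Z :=
  SMor (scomp_nat b a).

Definition SCat : Cat.
Proof.
refine (@Cat_ sobj smor scompose sid _ _ _).
- by move=> a b f; apply: smor_eq => n /=; rewrite comp1f.
- by move=> a b f; apply: smor_eq => n /=; rewrite compf1.
- by move=> a b c d h g f; apply: smor_eq => n /=; rewrite compA.
Defined.
End Simplicial.

(** * Oplax monoidal functors Delta_{*,*}^op -> (C, x, 1)              *)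

Section Oplax.
Variables (C : Cat) (P : FinProducts C).

(** [p] (x) [q] = [p+q]; for f : [p]->[p'], g : [q]->[q'] the map f (x) g
    acts by f on {0..p} and by (shifted) g on {p..p+q}.  We state the
    naturality of the oplax structure for any map h with this graph. *)
Definition is_tensor p p' q q' (f : emap p p') (g : emap q q')
  (h : emap (p + q) (p' + q')) : Prop :=
  forall i : 'I_(p + q).+1,
    (efn h i : nat) = if (i <= p)%N then (efn f (inord i) : nat)
                      else (p' + efn g (inord (i - p)))%N.

(** the identity map between two presentations of the same ordinal
    (used to express the strict associativity / unitality of (x)). *)
Definition is_cast m n (h : emap m n) : Prop :=
  forall i : 'I_m.+1, (efn h i : nat) = i.

Record oplax := Oplax {
  oF : nat -> C;
  oact : forall m n, emap m n -> hom (oF n) (oF m);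
  oact_id : forall n, oact (eid n) = idm (oF n);
  oact_comp : forall l m n (f : emap l m) (g : emap m n),
      oact (ecomp f g) = comp (oact f) (oact g);
  omu : forall p q, hom (oF (p + q)) (prodo P (oF p) (oF q));
  oeps : hom (oF 0) (term P);
  omu_nat : forall p p' q q' (f : emap p p') (g : emap q q') (h : emap (p + q) (p' + q')),
      is_tensor f g h ->
      comp (omu p q) (oact h) = comp (fprodm P (oact f) (oact g)) (omu p' q');
  omu_coassoc : forall p q r (h : emap (p + q + r) (p + (q + r))),
      is_cast h ->
      comp (comp (fprodm P (omu p q) (idm (oF r))) (omu (p + q) r)) (oact h)
      = comp (passoc P (oF p) (oF q) (oF r))
             (comp (fprodm P (idm (oF p)) (omu q r)) (omu p (q + r)));
  omu_counit_l : forall p (h : emap (0 + p) p),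
      is_cast h ->
      comp (ppr2 P) (comp (fprodm P oeps (idm (oF p))) (comp (omu 0 p) (oact h)))
      = idm (oF p);
  omu_counit_r : forall p (h : emap (p + 0) p),
      is_cast h ->
      comp (ppr1 P) (comp (fprodm P (idm (oF p)) oeps) (comp (omu p 0) (oact h)))
      = idm (oF p) }.

Record omor (F G : oplax) := OMor {
  ocomp : forall n, hom (oF F n) (oF G n);
  onat : forall m n (f : emap m n),
      comp (ocomp m) (oact F f) = comp (oact G f) (ocomp n);
  omon : forall p q,
      comp (omu G p q) (ocomp (p + q)) = comp (fprodm P (ocomp p) (ocomp q)) (omu F p q);
  oepsm : comp (oeps G) (ocomp 0) = oeps F }.

Lemma omor_eq F G (a b : omor F G) : (forall n, ocomp a n = ocomp b n) -> a = b.
Proof.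
case: a b => a Ha Hb Hc [b Ha' Hb' Hc'] /= H.
have E : a = b by apply: functional_extensionality_dep.
subst b; f_equal; apply: proof_irrelevance.
Qed.

Lemma pair_comp c' c a b (f : hom c a) (g : hom c b) (k : hom c' c) :
  comp (pairm P f g) k = pairm P (comp f k) (comp g k).
Proof.
by rewrite [LHS]pair_uniq !compA ppr1_pair ppr2_pair.
Qed.

Lemma fprod_pair c a b a' b' (f : hom a a') (g : hom b b') (u : hom c a) (v : hom c b) :
  comp (fprodm P f g) (pairm P u v) = pairm P (comp f u) (comp g v).
Proof. by rewrite /fprodm pair_comp -!compA ppr1_pair ppr2_pair. Qed.

Lemma fprod_comp a b a' b' a'' b'' (f : hom a a') (g : hom b b')
  (f' : hom a' a'') (g' : hom b' b'') :
  comp (fprodm P f' g') (fprodm P f g) = fprodm P (comp f' f) (comp g' g).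
Proof. by rewrite {2}/fprodm fprod_pair !compA. Qed.

Lemma fprod_id a b : fprodm P (idm a) (idm b) = idm (prodo P a b).
Proof. by rewrite /fprodm !comp1f [RHS]pair_uniq !compf1. Qed.

Lemma oid_omon F p q :
  comp (omu F p q) (idm _) = comp (fprodm P (idm (oF F p)) (idm (oF F q))) (omu F p q).
Proof. by rewrite fprod_id comp1f compf1. Qed.
Lemma oid_nat F m n (f : emap m n) :
  comp (idm (oF F m)) (oact F f) = comp (oact F f) (idm (oF F n)).
Proof. by rewrite comp1f compf1. Qed.
Lemma oid_eps F : comp (oeps F) (idm _) = oeps F.
Proof. by rewrite compf1. Qed.
Definition oid F : omor F F := OMor (@oid_nat F) (@oid_omon F) (oid_eps F).

Section OCompose.
Variables (F G H : oplax) (b : omor G H) (a : omor F G).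
Lemma ocomp_nat m n (f : emap m n) :
  comp (comp (ocomp b m) (ocomp a m)) (oact F f)
  = comp (oact H f) (comp (ocomp b n) (ocomp a n)).
Proof. by rewrite -compA onat compA onat compA. Qed.
Lemma ocomp_mon p q :
  comp (omu H p q) (comp (ocomp b (p + q)) (ocomp a (p + q)))
  = comp (fprodm P (comp (ocomp b p) (ocomp a p)) (comp (ocomp b q) (ocomp a q)))
         (omu F p q).
Proof. by rewrite compA omon -compA omon compA fprod_comp. Qed.
Lemma ocomp_eps : comp (oeps H) (comp (ocomp b 0) (ocomp a 0)) = oeps F.
Proof. by rewrite compA !oepsm. Qed.
Definition ocompose : omor F H := OMor ocomp_nat ocomp_mon ocomp_eps.
End OCompose.

Definition OCat : Cat.
Proof.
refine (@Cat_ oplax omor (fun F G H b a => ocompose b a) oid _ _ _).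
- by move=> a b f; apply: omor_eq => n /=; rewrite comp1f.
- by move=> a b f; apply: omor_eq => n /=; rewrite compf1.
- by move=> a b c d h g f; apply: omor_eq => n /=; rewrite compA.
Defined.
End Oplax.

(** * The restriction functor  sC -> Oplax(Delta_{*,*}^op, C)           *)

(** front inclusion [p] -> [p+q], i |-> i  (so X(front) = d_{p+1}^q)   *)
Lemma front_mono p q : dmono [ffun i : 'I_p.+1 => (inord i : 'I_(p + q).+1)].
Proof.
apply/forallP => i; apply/forallP => j; apply/implyP => ij; rewrite !ffunE.
have hi := ltn_ord i; have hj := ltn_ord j.
by rewrite !inordK //; lia.
Qed.
Definition front p q : dmap p (p + q) := exist (@dmono p (p + q)) _ (front_mono p q).

(** back inclusion [q] -> [p+q], i |-> p + i  (so X(back) = d_0^p)     *)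
Lemma back_mono p q : dmono [ffun i : 'I_q.+1 => (inord (p + i) : 'I_(p + q).+1)].
Proof.
apply/forallP => i; apply/forallP => j; apply/implyP => ij; rewrite !ffunE.
have hi := ltn_ord i; have hj := ltn_ord j.
by rewrite !inordK //; lia.
Qed.
Definition back p q : dmap q (p + q) := exist (@dmono q (p + q)) _ (back_mono p q).

Lemma dfn_front p q i : (dfn (front p q) i : nat) = i.
Proof. by rewrite /dfn /= ffunE inordK //; have := ltn_ord i; lia. Qed.
Lemma dfn_back p q i : (dfn (back p q) i : nat) = (p + i)%N.
Proof. by rewrite /dfn /= ffunE inordK //; have := ltn_ord i; lia. Qed.
Lemma dfn_dcomp l m n (f : dmap l m) (g : dmap m n) i :
  dfn (dcomp f g) i = dfn g (dfn f i).
Proof. by rewrite /dfn /= ffunE. Qed.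

Section Restriction.
Variables (C : Cat) (P : FinProducts C) (X : sobj C).

Lemma sact_pw l m n (a : dmap l m) (b : dmap m n) (c : dmap l n) :
  (forall i, (dfn b (dfn a i) : nat) = dfn c i) ->
  comp (sact X a) (sact X b) = sact X c.
Proof.
by move=> H; rewrite -sact_comp; congr sact; apply: dmap_eq => i; rewrite dfn_dcomp.
Qed.

Definition R_act m n (f : emap m n) : hom (sX X n) (sX X m) := sact X (sval f).
Definition R_mu p q : hom (sX X (p + q)) (prodo P (sX X p) (sX X q)) :=
  pairm P (sact X (front p q)) (sact X (back p q)).

Lemma R_act_id n : R_act (eid n) = idm _.
Proof. exact: sact_id. Qed.
Lemma R_act_comp l m n (f : emap l m) (g : emap m n) :
  R_act (ecomp f g) = comp (R_act f) (R_act g).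
Proof. exact: sact_comp. Qed.

Lemma endpt0 m n (f : emap m n) : efn f ord0 = ord0.
Proof. by rewrite /efn; case: f => f /= /andP[/eqP H _]. Qed.
Lemma endptM m n (f : emap m n) : efn f ord_max = ord_max.
Proof. by rewrite /efn; case: f => f /= /andP[_ /eqP H]. Qed.

Lemma R_mu_nat p p' q q' (f : emap p p') (g : emap q q') (h : emap (p + q) (p' + q')) :
  is_tensor f g h ->
  comp (R_mu p q) (R_act h) = comp (fprodm P (R_act f) (R_act g)) (R_mu p' q').
Proof.
move=> Ht; rewrite /R_mu /R_act pair_comp fprod_pair.
congr (pairm P _ _); rewrite -!sact_comp; congr sact; apply: dmap_eq => i;
  rewrite !dfn_dcomp.
- have hi := ltn_ord i.
  rewrite dfn_front; move: (Ht (dfn (front p q) i)); rewrite /efn => ->.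
  by rewrite !dfn_front -ltnS hi inord_val.
- have hi := ltn_ord i.
  move: (Ht (dfn (back p q) i)); rewrite /efn => ->; rewrite dfn_back dfn_back.
  case: (posnP i) => [i0|ip].
  + rewrite i0 addn0 leqnn.
    have -> : (inord p : 'I_p.+1) = ord_max by apply: val_inj; rewrite /= inordK.
    have -> : i = ord0 by apply: val_inj.
    by move: (endptM f) (endpt0 g); rewrite /efn => -> -> /=; rewrite addn0.
  + have -> : (p + i <= p)%N = false by lia.
    congr (_ + _)%N; congr (nat_of_ord (dfn _ _)); apply: val_inj.
    by rewrite /= inordK; [lia | lia].
Qed.

Lemma passoc_pair c a b d (u : hom c a) (v : hom c b) (w : hom c d) :
  comp (passoc P a b d) (pairm P u (pairm P v w)) = pairm P (pairm P u v) w.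
Proof.
rewrite /passoc !pair_comp -!compA (ppr2_pair P u) !(ppr1_pair P) (ppr2_pair P v w). reflexivity.
Qed.

Lemma R_mu_coassoc p q r (h : emap (p + q + r) (p + (q + r))) :
  is_cast h ->
  comp (comp (fprodm P (R_mu p q) (idm (sX X r))) (R_mu (p + q) r)) (R_act h)
  = comp (passoc P (sX X p) (sX X q) (sX X r))
         (comp (fprodm P (idm (sX X p)) (R_mu q r)) (R_mu p (q + r))).
Proof.
move=> Hc; rewrite /R_mu /R_act !fprod_pair !comp1f.
rewrite [X in comp (passoc _ _ _ _) (pairm _ _ X)]pair_comp passoc_pair !pair_comp.
rewrite -!compA -!sact_comp.
congr (pairm P (pairm P _ _) _); congr sact; apply: dmap_eq => i;
  rewrite !dfn_dcomp; move: (Hc) => /(_ (dfn _ _)); rewrite /efn => ->;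
  rewrite ?dfn_front ?dfn_back ?dfn_front ?dfn_back //; lia.
Qed.

Lemma R_mu_counit_l p (h : emap (0 + p) p) :
  is_cast h ->
  comp (ppr2 P) (comp (fprodm P (bang P _) (idm (sX X p))) (comp (R_mu 0 p) (R_act h)))
  = idm (sX X p).
Proof.
move=> Hc; rewrite /R_mu /R_act pair_comp fprod_pair ppr2_pair comp1f -sact_comp -sact_id.
congr sact; apply: dmap_eq => i; rewrite dfn_dcomp.
by move: (Hc) => /(_ (dfn _ _)); rewrite /efn => ->; rewrite dfn_back /dfn /= ffunE.
Qed.

Lemma R_mu_counit_r p (h : emap (p + 0) p) :
  is_cast h ->
  comp (ppr1 P) (comp (fprodm P (idm (sX X p)) (bang P _)) (comp (R_mu p 0) (R_act h)))
  = idm (sX X p).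
Proof.
move=> Hc; rewrite /R_mu /R_act pair_comp fprod_pair ppr1_pair comp1f -sact_comp -sact_id.
congr sact; apply: dmap_eq => i; rewrite dfn_dcomp.
by move: (Hc) => /(_ (dfn _ _)); rewrite /efn => ->; rewrite dfn_front /dfn /= ffunE.
Qed.

Definition R_ob : oplax P :=
  @Oplax C P (sX X) R_act R_act_id R_act_comp R_mu (bang P _)
    R_mu_nat R_mu_coassoc R_mu_counit_l R_mu_counit_r.
End Restriction.

Section RFunctor.
Variables (C : Cat) (P : FinProducts C).

Section RMor.
Variables (X Y : sobj C) (a : smor X Y).
Lemma R_mor_nat m n (f : emap m n) :
  comp (scomp a m) (R_act X f) = comp (R_act Y f) (scomp a n).
Proof. exact: snat. Qed.
Lemma R_mor_mon p q :
  comp (R_mu P Y p q) (scomp a (p + q))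
  = comp (fprodm P (scomp a p) (scomp a q)) (R_mu P X p q).
Proof. by rewrite /R_mu pair_comp fprod_pair -!snat. Qed.
Lemma R_mor_eps : comp (bang P (sX Y 0)) (scomp a 0) = bang P (sX X 0).
Proof. exact: bang_uniq. Qed.
Definition R_mor : omor (R_ob P X) (R_ob P Y) :=
  @OMor C P (R_ob P X) (R_ob P Y) (scomp a) R_mor_nat R_mor_mon R_mor_eps.
End RMor.

Definition Rfun : Functor (SCat C) (OCat P).
Proof.
refine (@Functor_ (SCat C) (OCat P) (fun X => R_ob P X) (fun X Y a => R_mor a) _ _).
- by move=> X; apply: omor_eq.
- by move=> X Y Z b a; apply: omor_eq.
Defined.
End RFunctor.

(* Every monotone f : [m] -> [n] factors uniquely as an endpoint-preserving
   map [m] -> [b] followed by the interval inclusion [b] -> [a + b + c],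
   i |-> a + i, where a = f 0 and a + b = f m.  An oplax functor F on
   Delta_{*,*} already knows the value of a simplicial object on interval
   inclusions: the back a-face of the front (a+b)-face, read off from
   mu_{a,b} and mu_{a+b,c}.  Naturality of mu lets endpoint-preserving maps
   move past interval inclusions, coassociativity composes interval
   inclusions, and counitality makes the whole interval act trivially, so
   f |-> F(endpoint part) o F(interval part) is a simplicial object extending
   F.  Both round trips are then the identity on components. *)

From HB Require Import structures.
From mathcomp Require Import all_boot zify.

Set Implicit Arguments.
Unset Strict Implicit.
Unset Printing Implicit Defensive.

Coercion dmap_of_emap m n (h : emap m n) : dmap m n := sval h.

(* [dapp f i] is junk for [i > m] ([inord] sends it to 0), hence the bounds
   [i <= m] in the statements below. *)
Definition dapp m n (f : dmap m n) (i : nat) : nat := dfn f (inord i).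

Lemma dapp_le m n (f : dmap m n) i : dapp f i <= n.
Proof. by rewrite /dapp -ltnS ltn_ord. Qed.

Lemma dapp_mono m n (f : dmap m n) i j : i <= j -> j <= m -> dapp f i <= dapp f j.
Proof. by move=> ij jm; apply: dfn_mono; rewrite !inordK //; lia. Qed.

Lemma dapp_dcomp l m n (f : dmap l m) (g : dmap m n) i :
  dapp (dcomp f g) i = dapp g (dapp f i).
Proof. by rewrite /dapp dfn_dcomp inord_val. Qed.

Lemma dapp_ecomp l m n (f : emap l m) (g : emap m n) i :
  dapp (ecomp f g) i = dapp g (dapp f i).
Proof. exact: dapp_dcomp. Qed.

Lemma dapp_did n i : i <= n -> dapp (did n) i = i.
Proof. by move=> i_le; rewrite /dapp /dfn /= ffunE inordK. Qed.

Lemma dmap_eqP m n (f g : dmap m n) :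
  (forall i, i <= m -> dapp f i = dapp g i) -> f = g.
Proof.
by move=> fg; apply: dmap_eq => i; have := fg i; rewrite /dapp inord_val -ltnS; apply.
Qed.

Lemma emap_eqP m n (f g : emap m n) :
  (forall i, i <= m -> dapp f i = dapp g i) -> f = g.
Proof. by move=> fg; apply/val_inj/dmap_eqP. Qed.

Lemma dapp0 m n (f : dmap m n) : dapp f 0 = dfn f ord0.
Proof. by rewrite /dapp (_ : inord 0 = ord0) //; apply: val_inj; rewrite /= inordK. Qed.

Lemma dappM m n (f : dmap m n) : dapp f m = dfn f ord_max.
Proof. by rewrite /dapp (_ : inord m = ord_max) //; apply: val_inj; rewrite /= inordK. Qed.

Lemma dapp_emap0 m n (h : emap m n) : dapp h 0 = 0.
Proof. by rewrite dapp0; case: h => f /= /andP[/eqP-> _]. Qed.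

Lemma dapp_emapM m n (h : emap m n) : dapp h m = n.
Proof. by rewrite dappM; case: h => f /= /andP[_ /eqP->]. Qed.

Section DmapOf.
Variables (m n : nat) (phi : nat -> nat).
Hypotheses (phi_le : forall i, i <= m -> phi i <= n)
  (phi_mono : forall i j, i <= j -> j <= m -> phi i <= phi j).

Lemma dmap_of_mono : dmono [ffun i : 'I_m.+1 => (inord (phi i) : 'I_n.+1)].
Proof.
apply/forallP => i; apply/forallP => j; apply/implyP => ij; rewrite !ffunE.
have := ltn_ord i; have := ltn_ord j; rewrite !ltnS => im jm.
by rewrite !inordK ?ltnS ?phi_le // phi_mono.
Qed.
Definition dmap_of : dmap m n := exist (@dmono m n) _ dmap_of_mono.

Lemma dapp_dmap_of i : i <= m -> dapp dmap_of i = phi i.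
Proof. by move=> im; rewrite /dapp /dfn /= ffunE !inordK // ltnS phi_le. Qed.
End DmapOf.

Section EmapOf.
Variables (m n : nat) (phi : nat -> nat).
Hypotheses (phi0 : phi 0 = 0) (phim : phi m = n)
  (phi_mono : forall i j, i <= j -> j <= m -> phi i <= phi j).

Lemma emap_of_le i : i <= m -> phi i <= n.
Proof. by move=> im; rewrite -phim phi_mono. Qed.

Lemma emap_of_endpt : endpt (dmap_of emap_of_le phi_mono).
Proof.
by apply/andP; split; apply/eqP/val_inj;
  rewrite /= -?dapp0 -?dappM dapp_dmap_of.
Qed.
Definition emap_of : emap m n := exist (@endpt m n) _ emap_of_endpt.

Lemma dapp_emap_of i : i <= m -> dapp emap_of i = phi i.
Proof. exact: dapp_dmap_of. Qed.
End EmapOf.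

Lemma efn_dapp m n (h : emap m n) (i : 'I_m.+1) : (efn h i : nat) = dapp h i.
Proof. by rewrite /dapp inord_val. Qed.

Definition ecast m n (e : m = n) : emap m n :=
  @emap_of m n id erefl e (fun i j ij _ => ij).

Lemma dapp_ecast m n (e : m = n) i : i <= m -> dapp (ecast e) i = i.
Proof. exact: dapp_emap_of. Qed.

Lemma is_castP m n (h : emap m n) : is_cast h <-> forall i, i <= m -> dapp h i = i.
Proof.
split=> [hc i im | hc i]; first by have := hc (inord i); rewrite efn_dapp inordK.
by rewrite efn_dapp hc // -ltnS.
Qed.

Lemma ecast_cast m n (e : m = n) : is_cast (ecast e).
Proof. by apply/is_castP => i; apply: dapp_ecast. Qed.

Section Restrict.
Variables (m n : nat) (f : dmap m n) (a b a' b' : nat).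
Hypotheses (ab_le : a + b <= m) (fa : dapp f a = a') (fab : dapp f (a + b) = a' + b').

Lemma drestrict0 : dapp f (a + 0) - a' = 0.
Proof. by rewrite addn0 fa subnn. Qed.

Lemma drestrictM : dapp f (a + b) - a' = b'.
Proof. by rewrite fab addKn. Qed.

Lemma drestrict_mono i j : i <= j -> j <= b ->
  dapp f (a + i) - a' <= dapp f (a + j) - a'.
Proof. by move=> ij jb; apply/leq_sub2r/dapp_mono; lia. Qed.

Definition drestrict : emap b b' := emap_of drestrict0 drestrictM drestrict_mono.

Lemma dapp_drestrict i : i <= b -> a' + dapp drestrict i = dapp f (a + i).
Proof.
move=> ib; rewrite dapp_emap_of // subnKC // -fa.
by apply: dapp_mono; lia.
Qed.
End Restrict.

Section Core.
Variables (m n : nat) (f : dmap m n).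

Lemma dcore_span : dapp f (0 + m) = dapp f 0 + (dapp f m - dapp f 0).
Proof. by rewrite add0n subnKC // dapp_mono. Qed.

Lemma dcore_sum : dapp f 0 + (dapp f m - dapp f 0) + (n - dapp f m) = n.
Proof. by rewrite -dcore_span add0n subnKC // dapp_le. Qed.

Definition dcore : emap m (dapp f m - dapp f 0) :=
  @drestrict m n f 0 m _ _ (leqnn m) erefl dcore_span.

Lemma dapp_dcore i : i <= m -> dapp f 0 + dapp dcore i = dapp f i.
Proof. exact: dapp_drestrict. Qed.
End Core.

Section Products.
Variables (C : Cat) (P : FinProducts C) (d : C).

Lemma ppr1_fprod (a b a' b' : C) (f : hom a a') (g : hom b b') (x : hom d _) :
  comp (ppr1 P) (comp (fprodm P f g) x) = comp f (comp (ppr1 P) x).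
Proof. by rewrite compA ppr1_pair -compA. Qed.

Lemma ppr2_fprod (a b a' b' : C) (f : hom a a') (g : hom b b') (x : hom d _) :
  comp (ppr2 P) (comp (fprodm P f g) x) = comp g (comp (ppr2 P) x).
Proof. by rewrite compA ppr2_pair -compA. Qed.

Lemma ppr11_passoc (a b c : C) (x : hom d _) :
  comp (ppr1 P) (comp (ppr1 P) (comp (passoc P a b c) x)) = comp (ppr1 P) x.
Proof. by rewrite /passoc !pair_comp !ppr1_pair. Qed.

Lemma ppr21_passoc (a b c : C) (x : hom d _) :
  comp (ppr2 P) (comp (ppr1 P) (comp (passoc P a b c) x))
  = comp (ppr1 P) (comp (ppr2 P) x).
Proof. by rewrite /passoc !pair_comp ppr1_pair ppr2_pair -compA. Qed.

Lemma ppr2_passoc (a b c : C) (x : hom d _) :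
  comp (ppr2 P) (comp (passoc P a b c) x) = comp (ppr2 P) (comp (ppr2 P) x).
Proof. by rewrite /passoc pair_comp ppr2_pair -compA. Qed.
End Products.

Section OplaxFaces.
Variables (C : Cat) (P : FinProducts C) (F : oplax P).
Local Notation A := (oact F).
Local Notation mu := (omu F).

Lemma oact_cast n (h : emap n n) : is_cast h -> A h = idm _.
Proof.
move/is_castP=> hc; rewrite -(oact_id F); congr A.
by apply: emap_eqP => i i_le; rewrite hc // dapp_did.
Qed.

(* [k] (x) [l] is [k + l] only up to the cast [ecast e]; indexing the split
   by a proof of [k + l = n] keeps every later identity free of casts. *)
Definition osplit k l n (e : k + l = n) : hom (oF F n) (prodo P (oF F k) (oF F l)) :=
  comp (mu k l) (A (ecast e)).
Definition ofront k l n (e : k + l = n) : hom (oF F n) (oF F k) :=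
  comp (ppr1 P) (osplit e).
Definition oback k l n (e : k + l = n) : hom (oF F n) (oF F l) :=
  comp (ppr2 P) (osplit e).

Lemma osplit_nat m n (h : emap m n) k l k' l' (e : k + l = m) (e' : k' + l' = n)
    (h1 : emap k k') (h2 : emap l l') :
  (forall i, i <= k -> dapp h1 i = dapp h i) ->
  (forall i, i <= l -> k' + dapp h2 i = dapp h (k + i)) ->
  comp (osplit e) (A h) = comp (fprodm P (A h1) (A h2)) (osplit e').
Proof.
move=> h1E h2E.
have t_mono i j : i <= j -> j <= k + l -> dapp h i <= dapp h j.
  by move=> ij jkl; apply: dapp_mono; lia.
have tM : dapp h (k + l) = k' + l' by rewrite e dapp_emapM.
pose t := emap_of (dapp_emap0 h) tM t_mono.
have tE : ecomp (ecast e) h = ecomp t (ecast e').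
  apply: emap_eqP => i i_le; rewrite !dapp_ecomp dapp_ecast // dapp_ecast ?dapp_le //.
  by rewrite dapp_emap_of.
have t_tensor : is_tensor h1 h2 t.
  move=> i; have := ltn_ord i; rewrite ltnS => i_le.
  rewrite efn_dapp dapp_emap_of //; case: ifP => ik.
  - by rewrite -/(dapp h1 i) h1E.
  - by rewrite -/(dapp h2 (i - k)) h2E ?subnKC //; lia.
by rewrite /osplit -compA -oact_comp tE oact_comp compA (omu_nat F t_tensor) -compA.
Qed.

Lemma ofront_nat m n (h : emap m n) k l k' l' (e : k + l = m) (e' : k' + l' = n)
    (h1 : emap k k') :
  (forall i, i <= k -> dapp h1 i = dapp h i) ->
  comp (ofront e) (A h) = comp (A h1) (ofront e').
Proof.
move=> h1E.
have kl_le : k + l <= m by rewrite e.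
have hk : dapp h k = k' by rewrite -h1E // dapp_emapM.
have hkl : dapp h (k + l) = k' + l' by rewrite e dapp_emapM.
have h2E := dapp_drestrict kl_le hk hkl.
by rewrite /ofront -compA (osplit_nat e e' h1E h2E) ppr1_fprod.
Qed.

Lemma oback_nat m n (h : emap m n) k l k' l' (e : k + l = m) (e' : k' + l' = n)
    (h2 : emap l l') :
  (forall i, i <= l -> k' + dapp h2 i = dapp h (k + i)) ->
  comp (oback e) (A h) = comp (A h2) (oback e').
Proof.
move=> h2E.
have k_le : 0 + k <= m by rewrite -e leq_addr.
have hk : dapp h (0 + k) = 0 + k' by rewrite -[k]addn0 -h2E // dapp_emap0 addn0.
have h1E i : i <= k -> dapp (drestrict k_le (dapp_emap0 h) hk) i = dapp h i.
  by move=> ik; rewrite -[LHS]add0n dapp_drestrict.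
by rewrite /oback -compA (osplit_nat e e' h1E h2E) ppr2_fprod.
Qed.

Lemma ofront_id n (e : n + 0 = n) : ofront e = idm _.
Proof.
by have := omu_counit_r F (ecast_cast e); rewrite ppr1_fprod comp1f.
Qed.

Lemma oback_id n (e : 0 + n = n) : oback e = idm _.
Proof.
by have := omu_counit_l F (ecast_cast e); rewrite ppr2_fprod comp1f.
Qed.

Lemma osplit_coassoc a b c n (e : a + b + c = n) (e' : a + (b + c) = n) :
  comp (fprodm P (mu a b) (idm _)) (osplit e)
  = comp (passoc P _ _ _) (comp (fprodm P (idm _) (mu b c)) (osplit e')).
Proof.
have cast_abc := ecast_cast (esym (addnA a b c)).
have Ee : ecast e = ecomp (ecast (esym (addnA a b c))) (ecast e').
  apply: emap_eqP => i i_le.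
  by rewrite dapp_ecomp !dapp_ecast // ?addnA.
rewrite /osplit Ee oact_comp !compA (omu_coassoc F cast_abc).
by rewrite -!compA.
Qed.

Lemma osplit_id k l (e : k + l = k + l) : osplit e = mu k l.
Proof. by rewrite /osplit oact_cast ?compf1 //; apply: ecast_cast. Qed.

Lemma ofront_ofront a b c m n (e1 : a + b = m) (e2 : m + c = n) (e3 : a + (b + c) = n) :
  comp (ofront e1) (ofront e2) = ofront e3.
Proof.
subst m; rewrite /ofront osplit_id -compA.
have := congr1 (comp (comp (ppr1 P) (ppr1 P))) (osplit_coassoc e2 e3).
by rewrite -!compA ppr11_passoc !ppr1_fprod comp1f.
Qed.

Lemma oback_oback a b c m n (e1 : b + c = m) (e2 : a + m = n) (e3 : a + b + c = n) :
  comp (oback e1) (oback e2) = oback e3.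
Proof.
subst m; rewrite /oback osplit_id -compA.
have := congr1 (comp (ppr2 P)) (osplit_coassoc e3 e2).
by rewrite ppr2_fprod comp1f ppr2_passoc ppr2_fprod.
Qed.

Lemma oback_ofront a b c m l n (e1 : a + b = m) (e2 : m + c = n)
    (e3 : b + c = l) (e4 : a + l = n) :
  comp (oback e1) (ofront e2) = comp (ofront e3) (oback e4).
Proof.
subst m l; rewrite /oback /ofront !osplit_id -!compA.
have := congr1 (comp (comp (ppr2 P) (ppr1 P))) (osplit_coassoc e2 e4).
by rewrite -!compA ppr21_passoc ppr1_fprod ppr2_fprod.
Qed.

(* The image under F of the inclusion [b] -> [n], i |-> a + i
   (see [R_ointerval]). *)
Definition ointerval a b c n (e : a + b + c = n) : hom (oF F n) (oF F b) :=
  comp (oback (erefl (a + b))) (ofront e).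

Lemma ointerval_id n (e : 0 + n + 0 = n) : ointerval e = idm _.
Proof. by rewrite /ointerval ofront_id oback_id comp1f. Qed.

Lemma ointerval_comp a1 b c1 a2 b2 c2 n (e1 : a1 + b + c1 = b2)
    (e2 : a2 + b2 + c2 = n) (e3 : a2 + a1 + b + (c1 + c2) = n) :
  comp (ointerval e1) (ointerval e2) = ointerval e3.
Proof.
have e4 : a2 + a1 + b + c1 = a2 + b2 by rewrite -e1 !addnA.
rewrite /ointerval -[LHS]compA (compA (ofront e1)).
rewrite -(oback_ofront (addnA a2 a1 b) e4 e1 erefl) -compA (ofront_ofront e4 e2 e3).
by rewrite compA (oback_oback erefl (addnA a2 a1 b) erefl).
Qed.

Lemma ointerval_nat m n (h : emap m n) a b c a' b' c' (e : a + b + c = m)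
    (e' : a' + b' + c' = n) (h' : emap b b') :
  (forall i, i <= b -> a' + dapp h' i = dapp h (a + i)) ->
  comp (ointerval e) (A h) = comp (A h') (ointerval e').
Proof.
move=> h'E.
have ab_le : 0 + (a + b) <= m by rewrite -e leq_addr.
have hab : dapp h (0 + (a + b)) = 0 + (a' + b') by rewrite -h'E // dapp_emapM.
pose h1 := drestrict ab_le (dapp_emap0 h) hab.
have h1E i : i <= a + b -> dapp h1 i = dapp h i.
  by move=> i_le; rewrite -[LHS]add0n dapp_drestrict.
have h1E' i : i <= b -> a' + dapp h' i = dapp h1 (a + i).
  by move=> ib; rewrite h1E ?h'E // leq_add2l.
rewrite /ointerval -compA (ofront_nat e e' h1E) compA.
by rewrite (oback_nat erefl erefl h1E') -compA.
Qed.

Lemma oact_ointerval_congr m n a b c a' b' c' (e : a + b + c = n) (e' : a' + b' + c' = n)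
    (h : emap m b) (h' : emap m b') :
  (forall i, i <= m -> a + dapp h i = a' + dapp h' i) ->
  comp (A h) (ointerval e) = comp (A h') (ointerval e').
Proof.
move=> hh'; have := hh' 0 (leq0n m); rewrite !dapp_emap0 !addn0 => aa'; subst a'.
have := hh' m (leqnn m); rewrite !dapp_emapM => /addnI bb'; subst b'.
have cc' : c = c' by apply/eqP; rewrite -(eqn_add2l (a + b)) e e'.
subst c'; rewrite (eq_irrelevance e e'); congr (comp (A _) _).
by apply: emap_eqP => i im; apply/eqP; rewrite -(eqn_add2l a) hh'.
Qed.

Lemma ointerval_front p q (e : 0 + p + q = p + q) : ointerval e = comp (ppr1 P) (mu p q).
Proof. by rewrite /ointerval oback_id comp1f /ofront osplit_id. Qed.

Lemma ointerval_back p q (e : p + q + 0 = p + q) : ointerval e = comp (ppr2 P) (mu p q).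
Proof. by rewrite /ointerval ofront_id compf1 /oback osplit_id. Qed.
End OplaxFaces.

Section Extension.
Variables (C : Cat) (P : FinProducts C) (F : oplax P).
Local Notation A := (oact F).

Definition ext_act m n (f : dmap m n) : hom (oF F n) (oF F m) :=
  comp (A (dcore f)) (ointerval F (dcore_sum f)).

Lemma ext_act_spec m n (f : dmap m n) a b c (e : a + b + c = n) (h : emap m b) :
  (forall i, i <= m -> a + dapp h i = dapp f i) -> ext_act f = comp (A h) (ointerval F e).
Proof. by move=> hE; apply: oact_ointerval_congr => i im; rewrite dapp_dcore ?hE. Qed.

Lemma ext_act_id n : ext_act (did n) = idm _.
Proof.
by rewrite (@ext_act_spec _ _ _ 0 n 0 (addn0 n) (eid n)) // oact_id ointerval_id comp1f.
Qed.

Lemma ext_act_comp l m n (f : dmap l m) (g : dmap m n) :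
  ext_act (dcomp f g) = comp (ext_act f) (ext_act g).
Proof.
rewrite [ext_act f]/ext_act [ext_act g]/ext_act.
set f0 := dapp f 0; set fl := dapp f l; set g0 := dapp g 0; set gm := dapp g m.
set a' := dapp (dcore g) f0; set b' := dapp (dcore g) fl - a'.
have f0l : f0 <= fl by apply: dapp_mono.
have fl_le : fl <= m by apply: dapp_le.
have a'b' : a' <= dapp (dcore g) fl by apply: dapp_mono.
have span_le : f0 + (fl - f0) <= m by rewrite subnKC.
have span_end : dapp (dcore g) (f0 + (fl - f0)) = a' + b' by rewrite subnKC // subnKC.
have h'E := dapp_drestrict span_le erefl span_end.
have e' : a' + b' + ((gm - g0) - dapp (dcore g) fl) = gm - g0.
  by rewrite subnKC // subnKC // dapp_le.
have e'' : g0 + a' + b' + (((gm - g0) - dapp (dcore g) fl) + (n - gm)) = n.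
  by move: e' (dcore_sum g); lia.
(* Move [dcore g] past the interval of [f], then merge the two intervals. *)
rewrite -[RHS]compA (compA (ointerval F _)) (ointerval_nat F (dcore_sum f) e' h'E).
rewrite -compA (ointerval_comp F e' (dcore_sum g) e'') compA -oact_comp.
apply: ext_act_spec => i il; have fi_le := dapp_le (dcore f) i.
by rewrite dapp_ecomp dapp_dcomp -addnA h'E // dapp_dcore // dapp_dcore ?dapp_le.
Qed.

Definition ext_ob : sobj C := SObj ext_act_id ext_act_comp.
End Extension.

Section ExtensionMor.
Variables (C : Cat) (P : FinProducts C) (F1 F2 : oplax P) (a : omor F1 F2).

Lemma osplit_omor k l n (e : k + l = n) :
  comp (osplit F2 e) (ocomp a n) = comp (fprodm P (ocomp a k) (ocomp a l)) (osplit F1 e).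
Proof. by rewrite /osplit -compA -onat compA omon -compA. Qed.

Lemma ofront_omor k l n (e : k + l = n) :
  comp (ofront F2 e) (ocomp a n) = comp (ocomp a k) (ofront F1 e).
Proof. by rewrite /ofront -compA osplit_omor ppr1_fprod. Qed.

Lemma oback_omor k l n (e : k + l = n) :
  comp (oback F2 e) (ocomp a n) = comp (ocomp a l) (oback F1 e).
Proof. by rewrite /oback -compA osplit_omor ppr2_fprod. Qed.

Lemma ointerval_omor b c d n (e : b + c + d = n) :
  comp (ointerval F2 e) (ocomp a n) = comp (ocomp a c) (ointerval F1 e).
Proof. by rewrite /ointerval -[LHS]compA ofront_omor compA oback_omor -compA. Qed.

Lemma ext_act_omor m n (f : dmap m n) :
  comp (ocomp a m) (ext_act F1 f) = comp (ext_act F2 f) (ocomp a n).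
Proof. by rewrite /ext_act compA onat -compA -ointerval_omor compA. Qed.

Definition ext_mor : smor (ext_ob F1) (ext_ob F2) :=
  @SMor C (ext_ob F1) (ext_ob F2) (ocomp a) ext_act_omor.
End ExtensionMor.

Definition Efun (C : Cat) (P : FinProducts C) : Functor (OCat P) (SCat C).
Proof.
refine (@Functor_ (OCat P) (SCat C) (@ext_ob C P) (@ext_mor C P) _ _).
- by move=> F; apply: smor_eq.
- by move=> F G H b a; apply: smor_eq.
Defined.

Lemma dapp_front p q i : i <= p -> dapp (front p q) i = i.
Proof. by move=> ip; rewrite /dapp dfn_front inordK. Qed.

Lemma dapp_back p q i : i <= q -> dapp (back p q) i = p + i.
Proof. by move=> iq; rewrite /dapp dfn_back inordK. Qed.

Section RoundTrips.
Variables (C : Cat) (P : FinProducts C).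

Lemma R_ointerval (X : sobj C) a b c n (e : a + b + c = n) (d : dmap b n) :
  (forall i, i <= b -> dapp d i = a + i) -> ointerval (R_ob P X) e = sact X d.
Proof.
move=> dE; rewrite /ointerval /oback /ofront /osplit /= /R_mu /R_act.
rewrite !pair_comp ppr1_pair ppr2_pair -!sact_comp; congr (sact X _).
apply: dmap_eqP => i ib.
rewrite !dapp_dcomp dapp_ecast // dapp_back // dapp_front ?dapp_ecast ?dE //; lia.
Qed.

Lemma ext_R_act (X : sobj C) m n (f : dmap m n) : ext_act (R_ob P X) f = sact X f.
Proof.
have d_le i : i <= dapp f m - dapp f 0 -> dapp f 0 + i <= n.
  by move: (dcore_sum f); lia.
have d_mono i j : i <= j -> j <= dapp f m - dapp f 0 -> dapp f 0 + i <= dapp f 0 + j.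
  by move=> ij _; rewrite leq_add2l.
rewrite /ext_act (@R_ointerval X _ _ _ _ _ (dmap_of d_le d_mono)); last exact: dapp_dmap_of.
rewrite /= /R_act -sact_comp; congr (sact X _).
apply: dmap_eqP => i im.
by rewrite dapp_dcomp dapp_dmap_of ?dapp_le // dapp_dcore.
Qed.

Lemma ext_act_emap (F : oplax P) m n (h : emap m n) : ext_act F h = oact F h.
Proof.
by rewrite (@ext_act_spec _ _ _ _ _ _ 0 n 0 (addn0 n) h) // ointerval_id compf1.
Qed.

Lemma R_mu_ext (F : oplax P) p q : R_mu P (ext_ob F) p q = omu F p q.
Proof.
rewrite [RHS]pair_uniq /R_mu /=.
rewrite (@ext_act_spec _ _ _ _ _ (front p q) 0 p q erefl (eid p)); last first.
  by move=> i ip; rewrite dapp_front // dapp_did.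
rewrite (@ext_act_spec _ _ _ _ _ (back p q) p q 0 (addn0 _) (eid q)); last first.
  by move=> i iq; rewrite dapp_back // dapp_did.
by rewrite !oact_id !comp1f ointerval_front ointerval_back.
Qed.
End RoundTrips.

Section Equivalence.
Variables (C : Cat) (P : FinProducts C).

Lemma idm_natural (a b : C) (x y : hom a b) : x = y -> comp (idm b) x = comp y (idm a).
Proof. by move=> ->; rewrite comp1f compf1. Qed.

Definition ext_R_iso (X : sobj C) : smor X (ext_ob (R_ob P X)) :=
  @SMor C X (ext_ob (R_ob P X)) (fun n => idm _)
    (fun m n f => idm_natural (esym (ext_R_act P X f))).
Definition ext_R_iso_inv (X : sobj C) : smor (ext_ob (R_ob P X)) X :=
  @SMor C (ext_ob (R_ob P X)) X (fun n => idm _)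
    (fun m n f => idm_natural (ext_R_act P X f)).

Section RExt.
Variable F : oplax P.
Local Notation RF := (R_ob P (ext_ob F)).

Lemma R_ext_iso_mon p q :
  comp (omu F p q) (idm _) = comp (fprodm P (idm _) (idm _)) (omu RF p q).
Proof. by rewrite /= R_mu_ext fprod_id comp1f compf1. Qed.

Lemma R_ext_iso_inv_mon p q :
  comp (omu RF p q) (idm _) = comp (fprodm P (idm _) (idm _)) (omu F p q).
Proof. by rewrite /= R_mu_ext fprod_id comp1f compf1. Qed.

Lemma R_ext_iso_eps : comp (oeps F) (idm _) = oeps RF.
Proof. exact: bang_uniq. Qed.

Lemma R_ext_iso_inv_eps : comp (oeps RF) (idm _) = oeps F.
Proof. by rewrite compf1 [RHS]bang_uniq. Qed.

Definition R_ext_iso : omor RF F :=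
  @OMor C P RF F (fun n => idm _) (fun m n f => idm_natural (ext_act_emap F f))
    R_ext_iso_mon R_ext_iso_eps.
Definition R_ext_iso_inv : omor F RF :=
  @OMor C P F RF (fun n => idm _) (fun m n f => idm_natural (esym (ext_act_emap F f)))
    R_ext_iso_inv_mon R_ext_iso_inv_eps.
End RExt.
End Equivalence.

Theorem proposition3p8 (C : Cat) (P : FinProducts C) :
  is_equivalence (Rfun P).
Proof.
exists (Efun P), (@ext_R_iso C P), (@ext_R_iso_inv C P).
exists (@R_ext_iso C P), (@R_ext_iso_inv C P).
split=> [X Y f | F G g | X | F].
- by apply: smor_eq => n /=; rewrite comp1f compf1.
- by apply: omor_eq => n /=; rewrite comp1f compf1.
- by split; apply: smor_eq => n /=; rewrite comp1f.
- by split; apply: omor_eq => n /=; rewrite comp1f.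
Qed.
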